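(* Let $X,Y\subset\mathbb{Z}^d$ be nonempty finite sets. Then there exists $\tau\in\mathbb{Z}^d$ such that there is exactly one pair $(x,y)$ with $x\in X$, $y\in Y+\tau$ and $|x-y|=1$.
   Context: $|\cdot|$ is the Euclidean norm; $Y+\tau=\{y+\tau:y\in Y\}$. *)

From HB Require Import structures.
From mathcomp Require Import all_boot all_order all_algebra.
From mathcomp Require Import finmap.
Set Implicit Arguments. Unset Strict Implicit. Unset Printing Implicit Defensive.
Import Order.TTheory GRing.Theory Num.Theory.
Local Open Scope ring_scope.
Local Open Scope fset_scope.

Definition sqnorm (d : nat) (v : 'rV[int]_d) : int :=
  \sum_(i < d) (v ord0 i) ^+ 2.

(* |x - y| = 1  <->  |x - y|^2 = 1 (the norm is the nonnegative root). *)
Definition unit_dist (d : nat) (x y : 'rV[int]_d) : Prop :=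
  sqnorm (x - y) = 1.

Definition translate (d : nat) (Y : {fset 'rV[int]_d}) (tau : 'rV[int]_d)
  : {fset 'rV[int]_d} := [fset (y + tau)%R | y in Y].

From mathcomp Require Import all_boot all_order all_algebra.
From mathcomp Require Import finmap.
From mathcomp Require Import ring lra.
Set Implicit Arguments.
Unset Strict Implicit.
Unset Printing Implicit Defensive.
Import Order.TTheory GRing.Theory Num.Theory.
Local Open Scope fset_scope.
Local Open Scope ring_scope.

(* Order Z^d lexicographically and pick x lex-greatest in X and y lex-least
   in Y.  With e the first unit vector, the translation tau = x + e - y puts
   y + tau = x + e next to x.  Any other pair x' in X, y' + tau at distance 1
   gives x' - (y' + tau) = -(w + e) with w = (x - x') + (y' - y) lex-nonnegative;
   then w_1 >= 0, so |w + e|^2 = |w|^2 + 2 w_1 + 1 = 1 forces w = 0, and as the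
   lexicographic cone is pointed, x' = x and y' = y. *)

Lemma total_rel_max (T : eqType) (r : T -> T -> Prop) (s : seq T) (x0 : T) :
  (forall a b, r a b \/ r b a) -> (forall a b c, r a b -> r b c -> r a c) ->
  x0 \in s -> exists2 x, x \in s & forall y, y \in s -> r y x.
Proof.
move=> tot tr; elim: s x0 => // a s IH x0 _.
have raa : r a a by case: (tot a a).
case: s IH => [_|b s IH].
  by exists a => [|y]; rewrite ?mem_head // inE => /eqP ->.
have [x xs Hx] := IH b (mem_head _ _).
case: (tot a x) => rax.
  exists x => [|y]; first by rewrite inE xs orbT.
  by rewrite inE => /orP [/eqP ->|/Hx].
exists a => [|y]; first exact: mem_head.
by rewrite inE => /orP [/eqP ->|/Hx ryx] //; exact: tr ryx rax.
Qed.

Section LexicographicCone.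

Variable n : nat.
Implicit Types v w : 'rV[int]_n.

Definition lex_pos v :=
  exists i : 'I_n, 0 < v 0 i /\ forall j : 'I_n, (j < i)%N -> v 0 j = 0.

Definition lex_nonneg v := v = 0 \/ lex_pos v.

Lemma lex_nonnegD v w : lex_nonneg v -> lex_nonneg w -> lex_nonneg (v + w).
Proof.
case=> [->|[i [vi Hv]]]; first by rewrite add0r.
case=> [->|[j [wj Hw]]]; first by rewrite addr0; right; exists i.
right; case: (ltngtP i j) => [ij|ji|/val_inj eij].
- exists i; split; first by rewrite mxE Hw // addr0.
  by move=> k ki; rewrite mxE Hv // Hw ?addr0 //; exact: ltn_trans ki ij.
- exists j; split; first by rewrite mxE Hv // add0r.
  by move=> k kj; rewrite mxE Hw // Hv ?addr0 //; exact: ltn_trans kj ji.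
- subst j; exists i; split; first by rewrite mxE addr_gt0.
  by move=> k ki; rewrite mxE Hv ?Hw ?addr0.
Qed.

Lemma lex_nonneg_anti v : lex_nonneg v -> lex_nonneg (- v) -> v = 0.
Proof.
case=> [//|[i [vi Hv]]]; case=> [/eqP|[j]]; first by rewrite oppr_eq0 => /eqP.
rewrite mxE oppr_gt0 => -[vj Hnv]; exfalso.
case: (ltngtP i j) => [ij|ji|/val_inj eij].
- by move: (Hnv i ij) vi; rewrite mxE => /eqP; rewrite oppr_eq0 => /eqP ->.
- by move: vj; rewrite Hv // ltxx.
- by subst j; move: (lt_trans vi vj); rewrite ltxx.
Qed.

Lemma lex_nonneg_total v : lex_nonneg v \/ lex_nonneg (- v).
Proof.
have [->|/eqP nz] := eqVneq v 0; first by left; left.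
have [i0 vi0] : exists i0, v 0 i0 != 0.
  apply/existsP; apply: contra_notT nz => /existsPn v0.
  by apply/rowP => j; rewrite mxE; apply/eqP/negPn.
case: (@arg_minnP _ i0 (fun j => v 0 j != 0) val vi0) => i vi imin.
have v_lt_i (j : 'I_n) : (j < i)%N -> v 0 j = 0.
  by move=> ji; apply/eqP; apply: contraTT ji => /imin; rewrite -leqNgt.
have [v_pos|v_neg] := ltP 0 (v 0 i); [left|right]; right; exists i; split.
- exact: v_pos.
- exact: v_lt_i.
- by rewrite mxE oppr_gt0 lt_neqAle vi v_neg.
- by move=> j ji; rewrite mxE v_lt_i ?oppr0.
Qed.

Lemma lex_nonneg_sum_eq0 v w :
  lex_nonneg v -> lex_nonneg w -> v + w = 0 -> v = 0.
Proof.
move=> hv hw /eqP; rewrite addr_eq0 => /eqP vE.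
by apply: lex_nonneg_anti; rewrite // vE opprK.
Qed.

Definition lex_le v w := lex_nonneg (w - v).

Lemma lex_le_total v w : lex_le v w \/ lex_le w v.
Proof. by rewrite /lex_le -[v - w]opprB; exact: lex_nonneg_total. Qed.

Lemma lex_le_trans u v w : lex_le u v -> lex_le v w -> lex_le u w.
Proof.
by move=> uv vw; rewrite /lex_le -[w - u](subrKA v) addrC; exact: lex_nonnegD.
Qed.

End LexicographicCone.

Lemma lex_nonneg_head n (w : 'rV[int]_n.+1) : lex_nonneg w -> 0 <= w 0 0.
Proof.
case=> [->|[i [wi Hw]]]; first by rewrite mxE.
have [i0|i_gt0] := posnP i; last by rewrite (Hw 0 i_gt0).
have -> : (0 : 'I_n.+1) = i by exact: val_inj.
exact: ltW.
Qed.

Lemma sqnormN n (v : 'rV[int]_n) : sqnorm (- v) = sqnorm v.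
Proof. by apply: eq_bigr => i _; rewrite mxE sqrrN. Qed.

Lemma sqnorm_eq0 n (v : 'rV[int]_n) : sqnorm v = 0 -> v = 0.
Proof.
move=> /psumr_eq0P v0; apply/rowP => i; rewrite mxE.
by apply/eqP; rewrite -sqrf_eq0; apply/eqP/v0 => // j _; exact: sqr_ge0.
Qed.

Lemma sqnormD_delta n (w : 'rV[int]_n) (i : 'I_n) :
  sqnorm (w + delta_mx 0 i) = sqnorm w + 2 * w 0 i + 1.
Proof.
rewrite /sqnorm (bigD1 i) // [in RHS](bigD1 i) //= !mxE !eqxx.
rewrite (eq_bigr (fun j => w 0 j ^+ 2)) /= => [|j /negbTE ji]; first ring.
by rewrite !mxE ji addr0.
Qed.

Lemma sqnorm_ge0 n (v : 'rV[int]_n) : 0 <= sqnorm v.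
Proof. by apply: sumr_ge0 => i _; exact: sqr_ge0. Qed.

Lemma sqnorm_delta n (i : 'I_n) : sqnorm (delta_mx 0 i) = 1.
Proof.
rewrite -[delta_mx 0 i]add0r sqnormD_delta mxE mulr0 addr0.
by rewrite /sqnorm big1 ?add0r // => j _; rewrite mxE expr0n.
Qed.

Lemma lex_nonneg_sqnormD_delta0 n (w : 'rV[int]_n.+1) :
  lex_nonneg w -> sqnorm (w + delta_mx 0 0) = 1 -> w = 0.
Proof.
move=> /lex_nonneg_head w00; rewrite sqnormD_delta => h.
by apply: sqnorm_eq0; have := sqnorm_ge0 w; lra.
Qed.

Theorem lemma3p4 (d : nat) (hd : (0 < d)%N) (X Y : {fset 'rV[int]_d})
  (hX : X != fset0) (hY : Y != fset0) :
  exists tau : 'rV[int]_d,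
    exists p : 'rV[int]_d * 'rV[int]_d,
      [/\ p.1 \in X, p.2 \in translate Y tau, unit_dist p.1 p.2 &
        forall x y : 'rV[int]_d,
          x \in X -> y \in translate Y tau -> unit_dist x y -> (x, y) = p].
Proof.
case: d hd X Y hX hY => [//|n] _ X Y /fset0Pn [x0 x0X] /fset0Pn [y0 y0Y].
set e : 'rV[int]_n.+1 := delta_mx 0 0.
have [x xX x_max] := total_rel_max (@lex_le_total _) (@lex_le_trans _) x0X.
have [y yY y_min] := total_rel_max (r := fun a b => lex_le b a)
  (fun a b => lex_le_total b a) (fun a b c ab bc => lex_le_trans bc ab) y0Y.
exists (x + e - y), (x, x + e); split => //=.
- by apply/imfsetP; exists y; rewrite // [y + _]addrC subrK.
- by rewrite /unit_dist opprD addNKr sqnormN sqnorm_delta.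
move=> x' _ x'X /imfsetP [y' y'Y ->]; rewrite /unit_dist.
have x'x := x_max x' x'X; have yy' := y_min y' y'Y.
have -> : x' - (y' + (x + e - y)) = - ((x - x') + (y' - y) + e).
  by apply/rowP => j; rewrite !mxE; ring.
rewrite sqnormN => /(lex_nonneg_sqnormD_delta0 (lex_nonnegD x'x yy')) w0.
have /subr0_eq xE := lex_nonneg_sum_eq0 x'x yy' w0.
by move: w0; rewrite -xE subrr add0r => /subr0_eq ->; rewrite [y + _]addrC subrK.
Qed.
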